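(* Let $A$ be a commutative ring with $1\ne0$. The valuation divisibilities on $A$ correspond one-to-one to the Bourbaki valuations of $A$ (up to equivalence), via $v\mapsto |^v$ where $a|^vb\Leftrightarrow v(a)\le v(b)$; moreover $I(|^v)=v^{-1}(\infty)$.
   Context: A divisibility on $A$ is a binary relation $|\subseteq A\times A$ such that for all $a,b,c$: (1) $a|a$; (2) $a|b,\ b|c\Rightarrow a|c$; (3) $a|b,\ a|c\Rightarrow a|b-c$; (4) $a|b\Rightarrow ac|bc$; (5) $0\nmid1$. Support $I(|)=\{a;\ 0|a\}$. $|$ is total if $a|b$ or $b|a$ for all $a,b$; it has cancellation if $0\nmid c$ and $ac|bc$ imply $a|b$; it is a valuation divisibility if it is total and has cancellation. A Bourbaki valuation on $A$ is a map $v:A\to\Gamma\cup\{\infty\}$, $\Gamma$ an ordered abelian group, such that $I=v^{-1}(\infty)$ is a prime ideal of $A$ and there is a field valuation $\bar v$ on $\mathrm{Quot}(A/I)$ with $v(a)=\bar v(a+I)$ for all $a\in A$. Two Bourbaki valuations are equivalent if they have the same $v^{-1}(\infty)$ and their induced field valuations have the same valuation ring. *)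

From HB Require Import structures.
From mathcomp Require Import all_boot all_order all_algebra.
Set Implicit Arguments. Unset Strict Implicit. Unset Printing Implicit Defensive.
Import GRing.Theory.
Local Open Scope ring_scope.

Section Divisibility.
Variable A : comNzRingType.

Definition divisibility (d : A -> A -> Prop) : Prop :=
  [/\ (forall a, d a a),
      (forall a b c, d a b -> d b c -> d a c),
      (forall a b c, d a b -> d a c -> d a (b - c)),
      (forall a b c, d a b -> d (a * c) (b * c))
    & ~ d 0 1].

Definition support_div (d : A -> A -> Prop) (a : A) : Prop := d 0 a.

Definition total_div (d : A -> A -> Prop) : Prop := forall a b, d a b \/ d b a.

Definition cancellation_div (d : A -> A -> Prop) : Prop :=
  forall a b c, ~ d 0 c -> d (a * c) (b * c) -> d a b.

Definition valuation_divisibility (d : A -> A -> Prop) : Prop :=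
  [/\ divisibility d, total_div d & cancellation_div d].
End Divisibility.

(** * Ordered abelian groups and Gamma \cup {oo} (encoded as [option G],
      [None] standing for oo) *)
Definition ordered_abelian_group (G : zmodType) (le : rel G) : Prop :=
  [/\ (forall x, le x x),
      (forall x y, le x y -> le y x -> x = y),
      (forall x y z, le x y -> le y z -> le x z),
      (forall x y, le x y || le y x)
    & (forall x y z, le x y -> le (x + z) (y + z))].

Definition oleq (G : zmodType) (le : rel G) (x y : option G) : bool :=
  match x, y with
  | _, None => true
  | None, Some _ => false
  | Some a, Some b => le a b
  end.

Definition oadd (G : zmodType) (x y : option G) : option G :=
  match x, y with
  | Some a, Some b => Some (a + b)
  | _, _ => None
  end.

Definition field_valuation (K : fieldType) (G : zmodType) (le : rel G)
    (w : K -> option G) : Prop :=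
  [/\ (forall x, w x = None <-> x = 0),
      (forall x y, w (x * y) = oadd (w x) (w y))
    & (forall x y, oleq le (w x) (w (x + y)) || oleq le (w y) (w (x + y)))].

Definition valuation_ring (K : fieldType) (G : zmodType) (le : rel G)
    (w : K -> option G) (x : K) : Prop := oleq le (Some 0) (w x).

Section Bourbaki.
Variable A : comNzRingType.

Definition is_prime_ideal (I : A -> Prop) : Prop :=
  [/\ I 0,
      (forall a b, I a -> I b -> I (a + b)),
      (forall a b, I b -> I (a * b)),
      ~ I 1
    & (forall a b, I (a * b) -> I a \/ I b)].

Definition infty_set (G : zmodType) (v : A -> option G) (a : A) : Prop :=
  v a = None.

(** [quot_field_data I K phi]: [phi] is a ring morphism A -> K with kernel
    [I] and every element of [K] is a fraction [phi a / phi b]; i.e. [phi]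
    is (up to isomorphism) the map A -> A/I -> Quot(A/I). *)
Definition quot_field_data (I : A -> Prop) (K : fieldType) (phi : {rmorphism A -> K}) : Prop :=
  (forall a, phi a = 0 <-> I a) /\
  (forall x : K, exists a b, phi b != 0 /\ x = phi a / phi b).

(** [induced_field_valuation v K phi w]: [w] is a field valuation on
    K = Quot(A / v^-1(oo)) with v(a) = w(a + I). *)
Definition induced_field_valuation (G : zmodType) (le : rel G) (v : A -> option G)
    (K : fieldType) (phi : {rmorphism A -> K}) (w : K -> option G) : Prop :=
  [/\ quot_field_data (infty_set v) phi,
      field_valuation le w
    & (forall a, v a = w (phi a))].

Definition bourbaki_valuation (G : zmodType) (le : rel G) (v : A -> option G) : Prop :=
  [/\ ordered_abelian_group le,
      is_prime_ideal (infty_set v)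
    & exists (K : fieldType) (phi : {rmorphism A -> K}) (w : K -> option G),
        induced_field_valuation le v phi w].

(** Equivalence: same v^-1(oo), and the induced field valuations have the
    same valuation ring in Quot(A/I) (the two models of Quot(A/I) being
    identified through the canonical isomorphism phi1 a / phi1 b |-> phi2 a / phi2 b). *)
Definition bourbaki_equiv (G1 : zmodType) (le1 : rel G1) (v1 : A -> option G1)
    (G2 : zmodType) (le2 : rel G2) (v2 : A -> option G2) : Prop :=
  (forall a, v1 a = None <-> v2 a = None) /\
  (forall (K1 : fieldType) (phi1 : {rmorphism A -> K1}) (w1 : K1 -> option G1)
          (K2 : fieldType) (phi2 : {rmorphism A -> K2}) (w2 : K2 -> option G2),
     induced_field_valuation le1 v1 phi1 w1 ->
     induced_field_valuation le2 v2 phi2 w2 ->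
     forall a b, v1 b <> None ->
       (valuation_ring le1 w1 (phi1 a / phi1 b) <->
        valuation_ring le2 w2 (phi2 a / phi2 b))).

Definition div_of_val (G : zmodType) (le : rel G) (v : A -> option G) (a b : A) : Prop :=
  oleq le (v a) (v b).
End Bourbaki.

(* A Bourbaki valuation is determined by its restriction v to A, which satisfies
   v(0) = oo, v(1) = 0, v(ab) = v(a) + v(b) and v(a + b) >= min(v(a), v(b)).
   Conversely, every such map with values in an ordered abelian group extends
   to Quot(A/I), I = v^-1(oo), by v(a/b) = v(a) - v(b): this is well defined
   because a b' - a' b in I forces v(a b') = v(a' b).  These ring axioms turn
   into the divisibility axioms for a |^v b <-> v(a) <= v(b), and since the
   valuation ring of the field valuation consists of the a/b with v(b) <= v(a),
   |^v determines v up to equivalence.  For surjectivity, a valuation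
   divisibility | with support I gives the group of formal differences of
   elements of A \ I, with (a, b) <= (c, e) iff a e | c b; cancellation makes
   this a well-defined ordered abelian group, and a |-> (a, 1) is a valuation
   inducing |. *)

From HB Require Import structures.
From mathcomp Require Import all_boot all_order all_algebra.
From mathcomp Require Import boolp.
Set Implicit Arguments. Unset Strict Implicit. Unset Printing Implicit Defensive.
Import GRing.Theory.
Local Open Scope ring_scope.
Local Open Scope quotient_scope.

Section OrderedGroup.
Variables (G : zmodType) (le : rel G).
Hypothesis hG : ordered_abelian_group le.
Implicit Types x y z g : G.

Lemma oag_refl x : le x x. Proof. by case: hG. Qed.
Lemma oag_anti x y : le x y -> le y x -> x = y.
Proof. by case: hG => _ anti _ _ _; apply: anti. Qed.
Lemma oag_trans x y z : le x y -> le y z -> le x z.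
Proof. by case: hG => _ _ trans _ _; apply: trans. Qed.
Lemma oag_total x y : le x y || le y x. Proof. by case: hG. Qed.
Lemma oag_add2r z x y : le x y -> le (x + z) (y + z).
Proof. by case: hG => _ _ _ _ add; apply: add. Qed.
Lemma oag_add2rK z x y : le (x + z) (y + z) -> le x y.
Proof. by move/(oag_add2r (- z)); rewrite !addrK. Qed.

Lemma oag_double0 x : x + x = 0 -> x = 0.
Proof.
move=> xx0; case/orP: (oag_total x 0) => x_le;
  by apply: oag_anti => //; have := oag_add2r x x_le; rewrite xx0 add0r.
Qed.

Lemma oleqNl (x : option G) : oleq le None x = (x == None).
Proof. by case: x. Qed.
Lemma oleq_refl (x : option G) : oleq le x x.
Proof. by case: x => //= x; apply: oag_refl. Qed.
Lemma oleq_anti (x y : option G) : oleq le x y -> oleq le y x -> x = y.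
Proof. by case: x y => [x|] [y|] //= xy yx; rewrite (oag_anti xy yx). Qed.
Lemma oleq_trans (x y z : option G) : oleq le x y -> oleq le y z -> oleq le x z.
Proof. by case: x y z => [x|] [y|] [z|] //=; apply: oag_trans. Qed.
Lemma oleq_total (x y : option G) : oleq le x y \/ oleq le y x.
Proof.
case: x y => [x|] [y|] /=; [apply/orP; exact: oag_total | by left | by right | by left].
Qed.
Lemma oleq_add2r (z x y : option G) : oleq le x y -> oleq le (oadd x z) (oadd y z).
Proof. by case: x y z => [x|] [y|] [z|] //=; apply: oag_add2r. Qed.
Lemma oleq_add2rK g (x y : option G) :
  oleq le (oadd x (Some g)) (oadd y (Some g)) -> oleq le x y.
Proof. by case: x y => [x|] [y|] //=; apply: oag_add2rK. Qed.
End OrderedGroup.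

Section OptionArith.
Variable G : zmodType.
Implicit Types x y z t : option G.

Definition osub x y := oadd x (omap -%R y).

Lemma osubr0 x : osub x (Some 0) = x.
Proof. by case: x => //= x; rewrite oppr0 addr0. Qed.

Lemma osub_oadd x y z t : osub (oadd x y) (oadd z t) = oadd (osub x z) (osub y t).
Proof. by case: x y z t => [x|] [y|] [z|] [t|] //=; rewrite opprD addrACA. Qed.

Lemma osub_cross x y z t g h : y = Some g -> t = Some h ->
  oadd x t = oadd z y -> osub x y = osub z t.
Proof.
move=> -> ->; case: x z => [x|] [z|] //= [xhzg]; congr Some.
by apply/eqP; rewrite subr_eq addrAC -xhzg addrK.
Qed.

Lemma oleq_osub2r (le : rel G) z x y :
  ordered_abelian_group le -> oleq le x y -> oleq le (osub x z) (osub y z).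
Proof. by move=> hG; apply: oleq_add2r. Qed.

Lemma oleq0_osub (le : rel G) x y : ordered_abelian_group le -> y <> None ->
  oleq le (Some 0) (osub x y) = oleq le y x.
Proof.
move=> hG; case: y => [g|] // _; case: x => [f|] //=.
apply/idP/idP => [/(oag_add2r hG g)|/(oag_add2r hG (- g))]; first by rewrite add0r subrK.
by rewrite subrr.
Qed.
End OptionArith.

Section FieldValuation.
Variables (K : fieldType) (G : zmodType) (le : rel G) (w : K -> option G).
Hypothesis hw : field_valuation le w.

Lemma fval_eqNone x : w x = None <-> x = 0. Proof. by case: hw. Qed.
Lemma fvalM x y : w (x * y) = oadd (w x) (w y). Proof. by case: hw => _ M _. Qed.
Lemma fval_ultra x y : oleq le (w x) (w (x + y)) || oleq le (w y) (w (x + y)).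
Proof. by case: hw. Qed.

Lemma fval1 : w 1 = Some 0.
Proof.
case w1: (w 1) => [g|]; last by move/fval_eqNone: w1 => /eqP; rewrite oner_eq0.
have := fvalM 1 1; rewrite mulr1 w1 /= => -[gg]; congr Some.
by apply: (@addrI _ g); rewrite addr0 -gg.
Qed.

Lemma fval_div x y : y != 0 -> w (x / y) = osub (w x) (w y).
Proof.
move=> y0; case wy: (w y) => [g|]; last by move/fval_eqNone: wy => /eqP; rewrite (negPf y0).
have wV : w y^-1 = Some (- g).
  have := fvalM y y^-1; rewrite mulfV // fval1 wy.
  case: (w y^-1) => [h|] //= -[gh]; congr Some.
  by apply: (@addrI _ g); rewrite subrr gh.
by rewrite fvalM wV.
Qed.
End FieldValuation.

Section RingValuation.
Variables (A : comNzRingType) (G : zmodType) (le : rel G).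

Definition ring_valuation (v : A -> option G) : Prop :=
  [/\ v 0 = None, v 1 = Some 0,
      (forall a b, v (a * b) = oadd (v a) (v b))
    & (forall a b, oleq le (v a) (v (a + b)) || oleq le (v b) (v (a + b)))].

Lemma bourbaki_ring_valuation v : bourbaki_valuation le v -> ring_valuation v.
Proof.
case=> _ _ [K [phi [w [_ hw vw]]]]; split.
- by rewrite vw rmorph0; apply/(fval_eqNone hw).
- by rewrite vw rmorph1 (fval1 hw).
- by move=> a b; rewrite !vw rmorphM (fvalM hw).
- by move=> a b; rewrite !vw rmorphD; apply: (fval_ultra hw).
Qed.

Variable v : A -> option G.
Hypotheses (hG : ordered_abelian_group le) (hv : ring_valuation v).

Lemma rval0 : v 0 = None. Proof. by case: hv. Qed.
Lemma rval1 : v 1 = Some 0. Proof. by case: hv. Qed.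
Lemma rvalM a b : v (a * b) = oadd (v a) (v b). Proof. by case: hv. Qed.
Lemma rval_ultra a b : oleq le (v a) (v (a + b)) || oleq le (v b) (v (a + b)).
Proof. by case: hv. Qed.

Lemma rvalN a : v (- a) = v a.
Proof.
have vN1 : v (-1) = Some 0.
  have := rvalM (-1) (-1); rewrite mulrNN mulr1 rval1.
  by case: (v (-1)) => [g|] //= -[/esym/(oag_double0 hG) ->].
by rewrite -mulN1r rvalM vN1; case: (v a) => //= g; rewrite add0r.
Qed.

Lemma rval_ultraB a b c :
  oleq le (v a) (v b) -> oleq le (v a) (v c) -> oleq le (v a) (v (b - c)).
Proof.
move=> ab ac; case/orP: (rval_ultra b (- c)); first exact: (oleq_trans hG ab).
by rewrite rvalN; apply: (oleq_trans hG ac).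
Qed.

Lemma rval_le_of_support a b : v (a - b) = None -> oleq le (v b) (v a).
Proof.
move=> vab; case/orP: (rval_ultra (a - b) b) => h; rewrite subrK in h => //.
by move: h; rewrite vab; case: (v a) (v b) => [?|] [?|].
Qed.

Lemma rval_eq_of_support a b : v (a - b) = None -> v a = v b.
Proof.
move=> vab; apply: (oleq_anti hG); apply: rval_le_of_support => //.
by rewrite -opprB rvalN.
Qed.

Lemma ring_valuation_divisibility : valuation_divisibility (div_of_val le v).
Proof.
rewrite /div_of_val; split; [split | |].
- by move=> a; apply: (oleq_refl hG).
- by move=> a b c; apply: (oleq_trans hG).
- exact: rval_ultraB.
- by move=> a b c ab; rewrite !rvalM; apply: (oleq_add2r hG).
- by rewrite rval0 rval1.
- by move=> a b; apply: (oleq_total hG).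
- move=> a b c; rewrite rval0 !rvalM.
  by case: (v c) => [g|] //= _; apply: (oleq_add2rK hG).
Qed.

Lemma ring_valuation_prime : is_prime_ideal (infty_set v).
Proof.
rewrite /infty_set; split.
- exact: rval0.
- move=> a b va vb.
  by case/orP: (rval_ultra a b); rewrite ?va ?vb; case: (v (a + b)).
- by move=> a b vb; rewrite rvalM vb; case: (v a).
- by rewrite rval1.
- by move=> a b; rewrite rvalM; case: (v a) (v b) => [?|] [?|]; auto.
Qed.

Lemma div_of_val0 a : div_of_val le v 0 a <-> v a = None.
Proof. by rewrite /div_of_val rval0; case: (v a). Qed.
End RingValuation.

Section Extension.
Variables (A : comNzRingType) (G : zmodType) (le : rel G) (v : A -> option G).
Hypotheses (hG : ordered_abelian_group le) (hv : ring_valuation le v).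
Variables (K : fieldType) (phi : {rmorphism A -> K}).
Hypothesis hK : quot_field_data (infty_set v) phi.

Lemma phi_eq0 a : phi a = 0 <-> v a = None. Proof. by case: hK. Qed.
Lemma phi_neq0 a : phi a != 0 <-> v a <> None.
Proof. by rewrite -phi_eq0; split => /eqP. Qed.
Lemma phi_neq0_val a : phi a != 0 -> exists g, v a = Some g.
Proof. by move/phi_neq0; case: (v a) => [g _|/(_ erefl)//]; exists g. Qed.

Lemma frac_rep_exists x : exists r : A * A, phi r.2 != 0 /\ x = phi r.1 / phi r.2.
Proof. by case: hK => _ /(_ x) [a [b]]; exists (a, b). Qed.

Definition frac_rep x : A * A := sval (cid (frac_rep_exists x)).

Definition extended_val (x : K) : option G :=
  osub (v (frac_rep x).1) (v (frac_rep x).2).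

Lemma extended_val_frac a b :
  phi b != 0 -> extended_val (phi a / phi b) = osub (v a) (v b).
Proof.
rewrite /extended_val /frac_rep; case: cid => -[a' b'] /= [b'0 ab] b0.
have [[g vb] [g' vb']] := (phi_neq0_val b0, phi_neq0_val b'0).
apply: (osub_cross vb' vb); rewrite -!(rvalM hv).
apply: (rval_eq_of_support hG hv); apply/phi_eq0.
move/eqP: ab; rewrite eqr_div // => /eqP ab.
by rewrite rmorphB !rmorphM ab subrr.
Qed.

Lemma extended_val_phi a : extended_val (phi a) = v a.
Proof.
rewrite -[phi a]divr1 -(rmorph1 phi) extended_val_frac ?rmorph1 ?oner_neq0 //.
by rewrite (rval1 hv) osubr0.
Qed.

Lemma extended_val_valuation : field_valuation le extended_val.
Proof.
split.
- move=> x; have [[a b] [b0 ->]] := frac_rep_exists x.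
  have [g vb] := phi_neq0_val b0.
  rewrite extended_val_frac // vb [_ / _ = 0](rwP eqP) mulf_eq0 invr_eq0 (negPf b0).
  by rewrite orbF -(rwP eqP) phi_eq0; case: (v a).
- move=> x y; have [[a b] [b0 ->]] := frac_rep_exists x.
  have [[c e] [e0 ->]] := frac_rep_exists y.
  rewrite /= mulf_div -!rmorphM extended_val_frac; last by rewrite rmorphM mulf_neq0.
  by rewrite !extended_val_frac // !(rvalM hv) osub_oadd.
- move=> x y; have [[a b] [b0 ->]] := frac_rep_exists x.
  have [[c e] [e0 ->]] := frac_rep_exists y.
  rewrite /= -[phi a / _]mulr1 -(divff e0) -[phi c / _]mul1r -(divff b0) !mulf_div.
  rewrite -mulrDl -!rmorphM -rmorphD [b * e]mulrC !extended_val_frac ?rmorphM ?mulf_neq0 //.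
  by case/orP: (rval_ultra hv (a * e) (b * c)) => h; apply/orP; [left|right];
    apply: (oleq_osub2r _ hG).
Qed.
End Extension.

(* [ring_quotient] equips A/P only with a ring structure; choosing its units
   classically makes A/P an integral domain, so that [{fraction A/P}] exists. *)
Section PrimeIdealQuotient.
Variables (R : comNzRingType) (P : prime_idealr R).
Local Notation Q := {ideal_quot P}.

Definition ideal_quot_unit : pred Q := fun x => `[< exists y, y * x = 1 >].
Definition ideal_quot_inv (x : Q) : Q :=
  if pselect (exists y, y * x == 1) is left h then xchoose h else x.

Lemma ideal_quot_mulVr : {in ideal_quot_unit, left_inverse 1 ideal_quot_inv *%R}.
Proof.
move=> x /asboolP ux; rewrite /ideal_quot_inv; case: pselect => [h|[]].
  exact/eqP/(xchooseP h).
by case: ux => y yx; exists y; rewrite yx.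
Qed.
Lemma ideal_quot_unitPl x y : y * x = 1 -> ideal_quot_unit x.
Proof. by move=> h; apply/asboolP; exists y. Qed.
Lemma ideal_quot_invr_out : {in [predC ideal_quot_unit], ideal_quot_inv =1 id}.
Proof.
move=> x /negP ux; rewrite /ideal_quot_inv; case: pselect => // h; case: ux.
by have [y /eqP] := h; apply: ideal_quot_unitPl.
Qed.
HB.instance Definition _ :=
  GRing.ComNzRing_hasMulInverse.Build Q ideal_quot_mulVr ideal_quot_unitPl ideal_quot_invr_out.
HB.instance Definition _ :=
  GRing.ComUnitRing_isIntegral.Build Q (@Quotient.rquot_IdomainAxiom R P).
End PrimeIdealQuotient.

Section FractionRepr.
Variable R : idomainType.
Lemma pi_fraction_numden (r : {ratio R}) :
  \pi_{fraction R} r = FracField.tofrac \n_r / FracField.tofrac \d_r.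
Proof.
have d0 : FracField.tofrac \d_r != 0 by rewrite tofrac_eq0 denom_ratioP.
apply: (canRL (mulfK d0)); unlock FracField.tofrac; rewrite !piE; apply/eqmodP.
rewrite /= FracField.equivfE !numden_Ratio ?mulf_neq0 ?denom_ratioP ?oner_neq0 //.
by rewrite !mulr1 mulrC.
Qed.
End FractionRepr.

Section QuotientField.
Variables (A : comNzRingType) (I : A -> Prop).
Hypothesis hI : is_prime_ideal I.

Definition ideal_pred : pred A := fun a => `[< I a >].

Lemma ideal_pred_closed : idealr_closed ideal_pred.
Proof.
case: hI => I0 ID IM I1 _; split; rewrite ?unfold_in; first exact/asboolP.
  exact/asboolP.
move=> a u v; rewrite !unfold_in => /asboolP Iu /asboolP Iv.
by apply/asboolP/ID => //; apply: IM.
Qed.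
Lemma ideal_pred_prime : prime_idealr_closed ideal_pred.
Proof.
case: hI => _ _ _ _ IP u v; rewrite !unfold_in => /asboolP/IP [] /asboolP -> //.
by rewrite orbT.
Qed.
HB.instance Definition _ := isIdealr.Build A ideal_pred ideal_pred_closed.
HB.instance Definition _ := isPrimeIdealrClosed.Build A ideal_pred ideal_pred_prime.

Lemma quot_field_exists :
  exists (K : fieldType) (phi : {rmorphism A -> K}), quot_field_data I phi.
Proof.
pose Q := {ideal_quot (ideal_pred : prime_idealr A)}.
pose phi : {rmorphism A -> {fraction Q}} := @FracField.tofrac Q \o \pi_Q.
exists {fraction Q}, phi; split.
  move=> a; rewrite /phi /= (rwP eqP) tofrac_eq0 -(rmorph0 \pi_Q).
  by rewrite -Quotient.idealrBE subr0 unfold_in; split=> /asboolP.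
elim/quotW=> r; rewrite pi_fraction_numden.
exists (repr \n_r), (repr \d_r); rewrite /phi /= !reprK tofrac_eq0; split => //.
exact: denom_ratioP.
Qed.
End QuotientField.

Lemma ring_valuation_bourbaki (A : comNzRingType) (G : zmodType) (le : rel G)
    (v : A -> option G) :
  ordered_abelian_group le -> ring_valuation le v -> bourbaki_valuation le v.
Proof.
move=> hG hv; have hI := ring_valuation_prime hv.
split=> //; have [K [phi hK]] := quot_field_exists hI.
exists K, phi, (extended_val hK); split => //.
- exact: extended_val_valuation.
- by move=> a; rewrite (extended_val_phi hG hv).
Qed.

Lemma valuation_ring_frac (A : comNzRingType) (G : zmodType) (le : rel G)
    (v : A -> option G) (K : fieldType) (phi : {rmorphism A -> K}) (w : K -> option G) :
  ordered_abelian_group le -> induced_field_valuation le v phi w ->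
  forall a b, v b <> None ->
    (valuation_ring le w (phi a / phi b) <-> oleq le (v b) (v a)).
Proof.
move=> hG [hK hw vw] a b vb; have /(phi_neq0 hK) b0 := vb.
by rewrite /valuation_ring (fval_div hw _ b0) -!vw (oleq0_osub _ hG).
Qed.

Lemma bourbaki_equivP (A : comNzRingType)
    (G1 : zmodType) (le1 : rel G1) (v1 : A -> option G1)
    (G2 : zmodType) (le2 : rel G2) (v2 : A -> option G2) :
  bourbaki_valuation le1 v1 -> bourbaki_valuation le2 v2 ->
  ((forall a b, div_of_val le1 v1 a b <-> div_of_val le2 v2 a b) <->
   bourbaki_equiv le1 v1 le2 v2).
Proof.
move=> hb1 hb2; have supp1 := div_of_val0 (bourbaki_ring_valuation hb1).
have supp2 := div_of_val0 (bourbaki_ring_valuation hb2).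
case: hb1 => hG1 _ [K1 [phi1 [w1 hw1]]]; case: hb2 => hG2 _ [K2 [phi2 [w2 hw2]]].
split=> [same | [sameI sameR] a b].
- split=> [a|]; first by rewrite -supp1 -supp2.
  move=> K1' phi1' w1' K2' phi2' w2' hw1' hw2' a b vb1.
  have vb2 : v2 b <> None by move/supp2/same/supp1.
  by rewrite (valuation_ring_frac hG1 hw1') // (valuation_ring_frac hG2 hw2') //; apply: same.
- case: (pselect (v1 a = None)) => va1.
    have /sameI va2 := va1; rewrite /div_of_val va1 va2 !oleqNl.
    by split=> /eqP/sameI/eqP.
  have va2 : v2 a <> None by move/sameI.
  rewrite /div_of_val -(valuation_ring_frac hG1 hw1) // -(valuation_ring_frac hG2 hw2) //.
  exact: sameR.
Qed.

Section ValuationDivisibility.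
Variables (A : comNzRingType) (d : A -> A -> Prop).
Hypothesis hd : valuation_divisibility d.

Let hdiv : divisibility d. Proof. by case: hd. Qed.
Lemma vdiv_refl a : d a a. Proof. by case: hdiv. Qed.
Lemma vdiv_trans a b c : d a b -> d b c -> d a c.
Proof. by case: hdiv => _ trans _ _ _; apply: trans. Qed.
Lemma vdivB a b c : d a b -> d a c -> d a (b - c).
Proof. by case: hdiv => _ _ sub _ _; apply: sub. Qed.
Lemma vdiv_mul2r c a b : d a b -> d (a * c) (b * c).
Proof. by case: hdiv => _ _ _ mul _; apply: mul. Qed.
Lemma vdiv01 : ~ d 0 1. Proof. by case: hdiv. Qed.
Lemma vdiv_total a b : d a b \/ d b a. Proof. by case: hd. Qed.
Lemma vdiv_mul2rK c a b : ~ d 0 c -> d (a * c) (b * c) -> d a b.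
Proof. by case: hd => _ _ can; apply: can. Qed.

Lemma vdivr0 a : d a 0. Proof. by rewrite -(subrr a); apply/vdivB/vdiv_refl/vdiv_refl. Qed.
Lemma vdivD a b c : d a b -> d a c -> d a (b + c).
Proof. by move=> ab ac; rewrite -[c]opprK -[- c]sub0r; apply/vdivB/vdivB/ac/vdivr0. Qed.
Lemma vdiv_mul2 a b c e : d a b -> d c e -> d (a * c) (b * e).
Proof.
move=> ab ce; apply: (vdiv_trans (vdiv_mul2r c ab)).
by rewrite ![b * _]mulrC; apply: vdiv_mul2r.
Qed.
Lemma vdiv_supp a b : d 0 b -> d a b.
Proof. exact/vdiv_trans/vdivr0. Qed.
Lemma supp_mull a b : d 0 b -> d 0 (a * b).
Proof. by move=> b0; rewrite mulrC -(mul0r a); apply: vdiv_mul2r. Qed.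
Lemma nonsupp_mul a b : ~ d 0 a -> ~ d 0 b -> ~ d 0 (a * b).
Proof. by move=> a0 b0; rewrite -(mul0r b) => /(vdiv_mul2rK b0). Qed.
End ValuationDivisibility.

Section ValueGroup.
Variables (A : comNzRingType) (d : A -> A -> Prop).
Hypothesis hd : valuation_divisibility d.

Definition nonsupp : pred A := fun a => ~~ `[< d 0 a >].

(* The pair (a, b) stands for the difference v(a) - v(b). *)
Definition vpair := {p : A * A | nonsupp p.1 && nonsupp p.2}.
HB.instance Definition _ := Choice.on vpair.

Lemma vpair_num (p : vpair) : ~ d 0 (sval p).1.
Proof. by case/andP: (valP p) => /asboolPn. Qed.
Lemma vpair_den (p : vpair) : ~ d 0 (sval p).2.
Proof. by case/andP: (valP p) => _ /asboolPn. Qed.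

Lemma vpair_mul_subproof (p q : vpair) :
  nonsupp ((sval p).1 * (sval q).1) && nonsupp ((sval p).2 * (sval q).2).
Proof.
by apply/andP; split; apply/asboolPn; apply: (nonsupp_mul hd);
  solve [exact: vpair_num | exact: vpair_den].
Qed.
Lemma vpair_inv_subproof (p : vpair) : nonsupp (sval p).2 && nonsupp (sval p).1.
Proof. by rewrite andbC (valP p). Qed.
Lemma vpair_one_subproof : nonsupp 1 && nonsupp 1.
Proof. by rewrite andbb; apply/asboolPn/(vdiv01 hd). Qed.

Definition vpair_mul (p q : vpair) : vpair :=
  exist _ ((sval p).1 * (sval q).1, (sval p).2 * (sval q).2) (vpair_mul_subproof p q).
Definition vpair_inv (p : vpair) : vpair :=
  exist _ ((sval p).2, (sval p).1) (vpair_inv_subproof p).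
Definition vpair_one : vpair := exist _ (1, 1) vpair_one_subproof.

Definition vpair_le (p q : vpair) : Prop :=
  d ((sval p).1 * (sval q).2) ((sval q).1 * (sval p).2).

Lemma vpair_le_refl p : vpair_le p p. Proof. exact: vdiv_refl. Qed.

Lemma vpair_le_trans p q r : vpair_le p q -> vpair_le q r -> vpair_le p r.
Proof.
rewrite /vpair_le => pq qr; apply: (vdiv_mul2rK hd (vpair_den (p:=q))); move: pq qr.
case: p q r => [[a b] ?] [[c e] ?] [[g f] ?] /= pq qr.
rewrite mulrAC; apply: (vdiv_trans hd (vdiv_mul2r hd f pq)).
by rewrite mulrAC [g * b * e]mulrAC; apply: vdiv_mul2r.
Qed.

Lemma vpair_le_mul2 p p' q q' :
  vpair_le p p' -> vpair_le q q' -> vpair_le (vpair_mul p q) (vpair_mul p' q').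
Proof.
rewrite /vpair_le /= => pp qq; rewrite mulrACA [X in d _ X]mulrACA.
exact: (vdiv_mul2 hd pp qq).
Qed.

Lemma vpair_le_inv p q : vpair_le p q -> vpair_le (vpair_inv q) (vpair_inv p).
Proof. by rewrite /vpair_le /= [_ * (sval q).1]mulrC [_ * (sval p).1]mulrC. Qed.

Definition vpair_eqv (p q : vpair) : bool := `[< vpair_le p q /\ vpair_le q p >].

Lemma vpair_eqv_refl : reflexive vpair_eqv.
Proof. by move=> p; apply/asboolP; split; apply: vpair_le_refl. Qed.
Lemma vpair_eqv_sym : symmetric vpair_eqv.
Proof. by move=> p q; apply/asboolP/asboolP => -[]. Qed.
Lemma vpair_eqv_trans : transitive vpair_eqv.
Proof.
move=> q p r /asboolP[pq qp] /asboolP[qr rq].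
by apply/asboolP; split; apply: vpair_le_trans; eassumption.
Qed.

Canonical vpair_eqv_equiv :=
  EquivRel vpair_eqv vpair_eqv_refl vpair_eqv_sym vpair_eqv_trans.

Lemma vpair_eqv_cross p q :
  (sval p).1 * (sval q).2 = (sval q).1 * (sval p).2 -> vpair_eqv p q.
Proof. by move=> pq; apply/asboolP; rewrite /vpair_le pq; split; apply: vdiv_refl. Qed.

Definition value_group := {eq_quot vpair_eqv}.
HB.instance Definition _ : EqQuotient _ vpair_eqv value_group :=
  EqQuotient.on value_group.
HB.instance Definition _ := Choice.on value_group.

Lemma repr_pi_le (p : vpair) :
  vpair_le (repr (\pi_value_group p)) p /\ vpair_le p (repr (\pi_value_group p)).
Proof. by have /eqmodP/asboolP := reprK (\pi_value_group p). Qed.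

Definition vg_zero : value_group := lift_cst value_group vpair_one.
Canonical vg_zero_morph := PiConst vg_zero.

Definition vg_add := lift_op2 value_group vpair_mul.
Lemma pi_vg_add : {morph \pi : p q / vpair_mul p q >-> vg_add p q}.
Proof.
move=> p q; unlock vg_add; apply/eqmodP/asboolP.
have [[pp pp'] [qq qq']] := (repr_pi_le p, repr_pi_le q).
by split; apply: vpair_le_mul2.
Qed.
Canonical vg_add_morph := PiMorph2 pi_vg_add.

Definition vg_opp := lift_op1 value_group vpair_inv.
Lemma pi_vg_opp : {morph \pi : p / vpair_inv p >-> vg_opp p}.
Proof.
move=> p; unlock vg_opp; apply/eqmodP/asboolP.
by have [pp pp'] := repr_pi_le p; split; apply: vpair_le_inv.
Qed.
Canonical vg_opp_morph := PiMorph1 pi_vg_opp.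

Lemma vg_addA : associative vg_add.
Proof.
elim/quotW=> p; elim/quotW=> q; elim/quotW=> r; rewrite !piE.
by apply/eqmodP/vpair_eqv_cross; rewrite /= !mulrA.
Qed.
Lemma vg_addC : commutative vg_add.
Proof.
elim/quotW=> p; elim/quotW=> q; rewrite !piE.
by apply/eqmodP/vpair_eqv_cross; rewrite /= [_ * (sval p).1]mulrC [_ * (sval p).2]mulrC.
Qed.
Lemma vg_add0 : left_id vg_zero vg_add.
Proof.
elim/quotW=> p; rewrite !piE.
by apply/eqmodP/vpair_eqv_cross; rewrite /= !mul1r.
Qed.
Lemma vg_addN : left_inverse vg_zero vg_opp vg_add.
Proof.
elim/quotW=> p; rewrite !piE.
by apply/eqmodP/vpair_eqv_cross; rewrite /= mulr1 mul1r mulrC.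
Qed.
HB.instance Definition _ := GRing.isZmodule.Build value_group vg_addA vg_addC vg_add0 vg_addN.

Definition vg_le : rel value_group := fun x y => `[< vpair_le (repr x) (repr y) >].

Lemma vg_le_pi p q : vg_le (\pi p) (\pi q) <-> vpair_le p q.
Proof.
have [[pp pp'] [qq qq']] := (repr_pi_le p, repr_pi_le q).
rewrite /vg_le asboolE; split => pq.
  exact: vpair_le_trans pp' (vpair_le_trans pq qq).
exact: vpair_le_trans pp (vpair_le_trans pq qq').
Qed.

Lemma value_group_ordered : ordered_abelian_group vg_le.
Proof.
split.
- by elim/quotW=> p; apply/vg_le_pi/vpair_le_refl.
- by elim/quotW=> p; elim/quotW=> q /vg_le_pi pq /vg_le_pi qp; apply/eqmodP/asboolP.
- elim/quotW=> p; elim/quotW=> q; elim/quotW=> r /vg_le_pi pq /vg_le_pi qr.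
  exact/vg_le_pi/(vpair_le_trans pq qr).
- elim/quotW=> p; elim/quotW=> q; apply/orP.
  by case: (vdiv_total hd ((sval p).1 * (sval q).2) ((sval q).1 * (sval p).2)) => pq;
    [left|right]; apply/vg_le_pi.
- elim/quotW=> p; elim/quotW=> q; elim/quotW=> r /vg_le_pi pq.
  by rewrite !piE; apply/vg_le_pi/vpair_le_mul2 => //; apply: vpair_le_refl.
Qed.

Definition vg_val (a : A) : option value_group :=
  if insub (a, 1) is Some p then Some (\pi p) else None.

Variant vg_val_spec (a : A) : option value_group -> Prop :=
  | VgValSupp of d 0 a : vg_val_spec a None
  | VgValPair (p : vpair) of sval p = (a, 1) : vg_val_spec a (Some (\pi p)).

Lemma vg_valP a : vg_val_spec a (vg_val a).
Proof.
rewrite /vg_val; case: insubP => [p _ pa|]; first exact: VgValPair.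
have one_nonsupp : nonsupp 1 by case/andP: vpair_one_subproof.
by rewrite /= one_nonsupp andbT negbK => /asboolP; apply: VgValSupp.
Qed.

Lemma vg_val_le a b : oleq vg_le (vg_val a) (vg_val b) <-> d a b.
Proof.
case: vg_valP => [a0|p pa]; case: vg_valP => [b0|q qb] //=.
- by split=> // _; apply: vdiv_supp.
- split=> // ab; case: (vpair_num (p:=q)); rewrite qb.
  exact: (vdiv_trans hd a0 ab).
- by split=> // _; apply: vdiv_supp.
- by rewrite vg_le_pi /vpair_le pa qb /= !mulr1.
Qed.

Lemma vg_val_ring_valuation : ring_valuation vg_le vg_val.
Proof.
split.
- by case: vg_valP => // p p0; case: (vpair_num (p:=p)); rewrite p0; apply: vdiv_refl.
- case: vg_valP => [/(vdiv01 hd)//|p p1]; congr Some.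
  by rewrite [0]piE; congr \pi; apply: val_inj.
- move=> a b; case: (vg_valP a) => [a0|p pa].
    case: vg_valP => // r rab; case: (vpair_num (p:=r)); rewrite rab mulrC.
    exact: (supp_mull hd).
  case: (vg_valP b) => [b0|q qb].
    case: vg_valP => // r rab; case: (vpair_num (p:=r)); rewrite rab.
    exact: (supp_mull hd).
  case: vg_valP => [ab0|r rab].
    by case: (nonsupp_mul hd (vpair_num (p:=p)) (vpair_num (p:=q))); rewrite pa qb.
  congr Some; rewrite piE; congr \pi; apply: val_inj.
  by rewrite /= rab pa qb /= mulr1.
- move=> a b; apply/orP; case: (vdiv_total hd a b) => ab; [left|right]; apply/vg_val_le.
    by apply: vdivD => //; apply: vdiv_refl.
  by rewrite addrC; apply: vdivD => //; apply: vdiv_refl.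
Qed.
End ValueGroup.

Theorem theorem3p1 (A : comNzRingType) :
  (forall (G : zmodType) (le : rel G) (v : A -> option G),
     bourbaki_valuation le v ->
     valuation_divisibility (div_of_val le v) /\
     (forall a : A, support_div (div_of_val le v) a <-> v a = None)) /\
  (forall (G1 : zmodType) (le1 : rel G1) (v1 : A -> option G1)
          (G2 : zmodType) (le2 : rel G2) (v2 : A -> option G2),
     bourbaki_valuation le1 v1 -> bourbaki_valuation le2 v2 ->
     ((forall a b : A, div_of_val le1 v1 a b <-> div_of_val le2 v2 a b) <->
      bourbaki_equiv le1 v1 le2 v2)) /\
  (forall d : A -> A -> Prop, valuation_divisibility d ->
     exists (G : zmodType) (le : rel G) (v : A -> option G),
       bourbaki_valuation le v /\ (forall a b : A, d a b <-> div_of_val le v a b)).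
Proof.
split.
  move=> G le v hb; have hv := bourbaki_ring_valuation hb; case: hb => hG _ _.
  by split; [exact: ring_valuation_divisibility | exact: div_of_val0].
split; first exact: bourbaki_equivP.
move=> d hd; exists (value_group hd), (@vg_le _ _ hd), (@vg_val _ _ hd); split.
  exact: ring_valuation_bourbaki (value_group_ordered hd) (vg_val_ring_valuation hd).
by move=> a b; rewrite /div_of_val vg_val_le.
Qed.
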